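(* Let $\mathcal X=\{x\in\mathbb{R}^{n_1}_+: x_i\in\{0,1\}\ \forall i\in\mathcal I\}$, and for $x\in\mathcal X$ let $f(x)$ be the optimal value of the problem $(\mathrm{Inner}(x))$ defined in the context ($f(x)=+\infty$ if it is infeasible). Assume the polyhedra $P_1$ and $P_2$ defined in the context are nonempty. Let $\mathcal J_1,\mathcal R_1$ be the sets of extreme points and extreme rays of $P_1$, and $\mathcal J_2,\mathcal R_2$ the sets of extreme points and extreme rays of $P_2$. Then the problem (MIP) $\min_{x\in\mathcal X} c_x^Tx+f(x)$ is equivalent (same optimal value and same optimal $x$) to the problem $\min_{x\in\mathcal X,\,t\in\mathbb{R}}\ c_x^Tx+t$ subject to (a) $t\ge \hat\psi^T(b-Ax)+\hat u_y^T(h_y-G_{xy}x)-\hat w\,(d^T\hat y-\hat v^T(k+K_xx))$ for all $(\hat\psi,\hat u_y,\hat w)\in\mathcal J_2$, $(\hat y,\hat v)\in\mathcal J_1$; (b) $d^T\tilde y-\tilde v^T(k+K_xx)\ge 0$ for all $(\tilde y,\tilde v)\in\mathcal R_1$; (c) $0\ge \tilde\psi^T(b-Ax)+\tilde u_y^T(h_y-G_{xy}x)$ for all $(\tilde\psi,\tilde u_y,0)\in\mathcal R_2$; (d) $0\ge \tilde\psi^T(b-Ax)+\tilde u_y^T(h_y-G_{xy}x)-\tilde w\,(d^T\hat y-\hat v^T(k+K_xx))$ for all $(\hat y,\hat v)\in\mathcal J_1$ and all $(\tilde\psi,\tilde u_y,\tilde w)\in\mathcal R_2$ with $\tilde w>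0$.
   Context: Data: $c_x\in\mathbb{R}^{n_1}$, $\mathcal I\subseteq\{1,\dots,n_1\}$, $A\in\mathbb{R}^{m\times n_1}$, $B\in\mathbb{R}^{m\times n_2}$, $b\in\mathbb{R}^m$, $c_y,d\in\mathbb{R}^{n_2}$, $G_{xy}\in\mathbb{R}^{p\times n_1}$, $G_y\in\mathbb{R}^{p\times n_2}$, $h_y\in\mathbb{R}^p$, $K_\psi\in\mathbb{R}^{q\times m}$, $K_s\in\mathbb{R}^{q\times r}$, $K_x\in\mathbb{R}^{q\times n_1}$, $k\in\mathbb{R}^q$ (the $K$'s and $k$ come from a McCormick linearization of bilinear terms in a strong-duality reformulation of a bilevel program with lower level $\min_{y\ge0}\{d^Ty:Ax+By\ge b\}$). $\mathbf 1$ is the all-ones vector. $(\mathrm{Inner}(x))$: minimize $c_y^Ty$ over $y\in\mathbb{R}^{n_2}_+,\psi\in\mathbb{R}^m_+,s\in\mathbb{R}^r_+$ subject to $G_yy\ge h_y-G_{xy}x$, $By\ge b-Ax$, $-B^T\psi\ge -d$, $-d^Ty+\psi^Tb-s^T\mathbf 1\ge 0$, $K_\psi\psi+K_ss\ge k+K_xx$. $P_1=\{(y,v)\ge 0: By-K_\psi^Tv\ge b,\ K_s^Tv\le\mathbf 1\}$; $P_2=\{(\psi,u_y,w)\ge 0: B^T\psi+G_y^Tu_y\le dw+c_y\}$ ($w$ scalar). Extreme rays are those of the recession cones of these (pointed) polyhedra. *)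

From HB Require Import structures.
From mathcomp Require Import all_boot all_order all_algebra.
From mathcomp Require Import all_classical all_reals ereal.
Set Implicit Arguments. Unset Strict Implicit. Unset Printing Implicit Defensive.
Import Order.TTheory GRing.Theory Num.Theory.
Local Open Scope ring_scope.
Local Open Scope classical_set_scope.

Section Defs.
Variable R : realType.

Definition dot n (u v : 'cV[R]_n) : R := \sum_(i < n) u i 0 * v i 0.

Definition lev n (u v : 'cV[R]_n) : Prop := forall i, u i 0 <= v i 0.
Definition nonneg n (u : 'cV[R]_n) : Prop := lev 0 u.

Definition ones n : 'cV[R]_n := const_mx 1.

Definition extreme_point (V : lmodType R) (S : set V) : set V :=
  [set x | S x /\ forall y z, S y -> S z -> forall l : R, 0 < l -> l < 1 ->
             x = l *: y + (1 - l) *: z -> y = z].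

Definition rec_cone (V : lmodType R) (S : set V) : set V :=
  [set d | forall x, S x -> forall l : R, 0 <= l -> S (x + l *: d)].

(* Extreme rays of a cone C: nonzero directions d in C such that any
   decomposition d = d1 + d2 inside C uses nonnegative multiples of d.
   (Every nonzero vector on an extreme ray is in this set.) *)
Definition extreme_ray (V : lmodType R) (C : set V) : set V :=
  [set d | C d /\ d != 0 /\ forall d1 d2, C d1 -> C d2 -> d = d1 + d2 ->
             (exists a : R, 0 <= a /\ d1 = a *: d) /\
             (exists b : R, 0 <= b /\ d2 = b *: d)].

Variables (n1 n2 m p q r : nat).
Variables (cx : 'cV[R]_n1) (I : {set 'I_n1})
  (A : 'M[R]_(m, n1)) (B : 'M[R]_(m, n2)) (b : 'cV[R]_m)
  (cy d : 'cV[R]_n2) (Gxy : 'M[R]_(p, n1)) (Gy : 'M[R]_(p, n2)) (hy : 'cV[R]_p)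
  (Kpsi : 'M[R]_(q, m)) (Ks : 'M[R]_(q, r)) (Kx : 'M[R]_(q, n1)) (k : 'cV[R]_q).

Definition Xset : set 'cV[R]_n1 :=
  [set x | nonneg x /\ forall i, i \in I -> x i 0 = 0 \/ x i 0 = 1].

Definition inner_feas (x : 'cV[R]_n1) (y : 'cV[R]_n2) (psi : 'cV[R]_m)
  (s : 'cV[R]_r) : Prop :=
  [/\ nonneg y, nonneg psi & nonneg s] /\
  [/\ lev (hy - Gxy *m x) (Gy *m y),
      lev (b - A *m x) (B *m y),
      lev (- d) (- (B^T *m psi)),
      0 <= - dot d y + dot psi b - dot s (ones r) &
      lev (k + Kx *m x) (Kpsi *m psi + Ks *m s)].

Definition fval (x : 'cV[R]_n1) : \bar R :=
  ereal_inf [set z | exists y psi s, inner_feas x y psi s /\ z = (dot cy y)%:E].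

Definition P1 : set ('cV[R]_n2 * 'cV[R]_q) :=
  [set yv | nonneg yv.1 /\ nonneg yv.2 /\
            lev b (B *m yv.1 - Kpsi^T *m yv.2) /\ lev (Ks^T *m yv.2) (ones r)].

Definition P2 : set ('cV[R]_m * 'cV[R]_p * R^o) :=
  [set t | nonneg t.1.1 /\ nonneg t.1.2 /\ 0 <= t.2 /\
           lev (B^T *m t.1.1 + Gy^T *m t.1.2) (t.2 *: d + cy)].

Definition J1 := extreme_point P1.
Definition R1 := extreme_ray (rec_cone P1).
Definition J2 := extreme_point P2.
Definition R2 := extreme_ray (rec_cone P2).

Definition mip_val : \bar R :=
  ereal_inf [set z | exists x, Xset x /\ z = (dot cx x)%:E + fval x].

Definition mip_opt (x : 'cV[R]_n1) : Prop :=
  Xset x /\ (fval x < +oo)%E /\ (dot cx x)%:E + fval x = mip_val.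

Definition lowgap (x : 'cV[R]_n1) (yv : 'cV[R]_n2 * 'cV[R]_q) : R :=
  dot d yv.1 - dot yv.2 (k + Kx *m x).

Definition dualterm (x : 'cV[R]_n1) (pu : 'cV[R]_m * 'cV[R]_p) : R :=
  dot pu.1 (b - A *m x) + dot pu.2 (hy - Gxy *m x).

Definition master_feas (x : 'cV[R]_n1) (t : R) : Prop :=
  [/\ Xset x,
      (forall j2 j1, J2 j2 -> J1 j1 ->
          t >= dualterm x j2.1 - j2.2 * lowgap x j1),
      (forall r1, R1 r1 -> lowgap x r1 >= 0),
      (forall r2, R2 r2 -> r2.2 = 0 -> 0 >= dualterm x r2.1) &
      (forall j1 r2, J1 j1 -> R2 r2 -> 0 < r2.2 ->
          0 >= dualterm x r2.1 - r2.2 * lowgap x j1)].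

Definition master_val : \bar R :=
  ereal_inf [set z | exists x t, master_feas x t /\ z = (dot cx x + t)%:E].

Definition master_opt (x : 'cV[R]_n1) : Prop :=
  exists t, master_feas x t /\ (dot cx x + t)%:E = master_val.

End Defs.

(* For fixed x, Inner(x) is a linear program. Its dual feasible points are the
   (psi, u_y, w, y, v) with (psi, u_y, w) in P2 and (y, v) in w P1 (in the
   recession cone of P1 when w = 0), and the dual objective is
   psi^T (b - A x) + u_y^T (h_y - G_xy x) - (d^T y - v^T (k + K_x x)).
   LP duality, obtained from Farkas' lemma (proved by Fourier-Motzkin
   elimination), makes f(x) the supremum of this objective, and Inner(x) is
   infeasible exactly when some dual ray has positive objective. Since P1 and
   P2 are pointed, a linear functional that is bounded below on the extreme
   points and nonnegative on the extreme rays is bounded below on the whole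
   polyhedron; applied to P1 and then to P2, this reduces the dual to the cuts:
   (b)-(d) hold exactly when Inner(x) is feasible, and then f(x) = min {t | (a)}. *)

From Pilot Require Import Defs.
From HB Require Import structures.
From mathcomp Require Import all_boot all_order all_algebra.
From mathcomp Require Import all_classical all_reals ereal.
From mathcomp Require Import ring lra.
Import Order.TTheory GRing.Theory Num.Theory.
Local Open Scope ring_scope.
Local Open Scope classical_set_scope.
Set Implicit Arguments. Unset Strict Implicit. Unset Printing Implicit Defensive.
Section FourierMotzkin.
Variables (R : realFieldType) (V : finType).

Definition constraint := ((V -> R) * R)%type.

Definition satisfies (z : V -> R) (c : constraint) := c.2 <= \sum_v c.1 v * z v.

Definition lincomb (l : R) (c : constraint) (l' : R) (c' : constraint) : constraint :=
  (fun v => l * c.1 v + l' * c'.1 v, l * c.2 + l' * c'.2).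

Definition conic_consequence (I : finType) (F : I -> constraint) (c : constraint) :=
  exists lam : I -> R, [/\ forall i, 0 <= lam i,
    forall v, c.1 v = \sum_i lam i * (F i).1 v & c.2 <= \sum_i lam i * (F i).2].

Section ConicConsequence.
Variables (I : finType) (F : I -> constraint).

Lemma conic_consequence_mem i : conic_consequence F (F i).
Proof.
exists (fun j => (j == i)%:R); split=> [j|v|]; first exact: ler0n.
- by rewrite (bigD1 i) //= eqxx mul1r big1 ?addr0 // => j /negbTE ->; rewrite mul0r.
- by rewrite (bigD1 i) //= eqxx mul1r big1 ?addr0 // => j /negbTE ->; rewrite mul0r.
Qed.

Lemma conic_consequence0 : conic_consequence F (fun=> 0, 0).
Proof.
by exists (fun=> 0); split=> [//|v|]; rewrite big1 // => i _; rewrite mul0r.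
Qed.

Lemma conic_consequence_lincomb l c l' c' : 0 <= l -> 0 <= l' ->
  conic_consequence F c -> conic_consequence F c' ->
  conic_consequence F (lincomb l c l' c').
Proof.
move=> l0 l'0 [lam [lam0 lam1 lam2]] [lam' [lam'0 lam'1 lam'2]].
exists (fun i => l * lam i + l' * lam' i); split=> [i|v|] /=.
- by rewrite addr_ge0 ?mulr_ge0.
- rewrite lam1 lam'1 !mulr_sumr -big_split /=.
  by apply: eq_bigr => i _; rewrite mulrDl !mulrA.
- under eq_bigr do rewrite mulrDl -!mulrA.
  by rewrite big_split /= -!mulr_sumr lerD // ler_wpM2l.
Qed.

Lemma conic_consequence_trans (J : finType) (G : J -> constraint) c :
  (forall j, conic_consequence F (G j)) -> conic_consequence G c ->
  conic_consequence F c.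
Proof.
move=> /boolp.choice [lam hlam] [mu [mu0 mu1 mu2]].
have sum_comp (f : I -> R) :
    \sum_i (\sum_j mu j * lam j i) * f i = \sum_j mu j * \sum_i lam j i * f i.
  under eq_bigr do rewrite mulr_suml.
  rewrite exchange_big; apply: eq_bigr => j _; rewrite mulr_sumr.
  by apply: eq_bigr => i _; rewrite mulrA.
exists (fun i => \sum_j mu j * lam j i); split=> [i|v|].
- by apply: sumr_ge0 => j _; rewrite mulr_ge0 //; case: (hlam j).
- by rewrite sum_comp mu1; apply: eq_bigr => j _; case: (hlam j) => _ ->.
- rewrite sum_comp; apply: (le_trans mu2); apply: ler_sum => j _.
  by apply: ler_wpM2l => //; case: (hlam j).
Qed.

End ConicConsequence.

Section Elimination.
Variable v0 : V.

Definition rest (c : constraint) (z : V -> R) := c.2 - \sum_(v | v != v0) c.1 v * z v.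

Lemma satisfiesE z c : satisfies z c = (rest c z <= c.1 v0 * z v0).
Proof. by rewrite /satisfies (bigD1 v0) //= addrC -lerBlDl. Qed.

Lemma rest_lincomb l c l' c' z :
  rest (lincomb l c l' c') z = l * rest c z + l' * rest c' z.
Proof.
rewrite /rest /= !mulrBr !mulr_sumr addrACA -opprD -big_split /=.
by congr (_ - _); apply: eq_bigr => v _; rewrite mulrDl !mulrA.
Qed.

Definition update (z : V -> R) (x : R) v := if v == v0 then x else z v.

Lemma rest_update c z x : rest c (update z x) = rest c z.
Proof. by congr (_ - _); apply: eq_bigr => v /negbTE; rewrite /update => ->. Qed.

Definition pair_comb (c c' : constraint) := lincomb (- c'.1 v0) c (c.1 v0) c'.

Variables (I : finType) (F : I -> constraint).

(* Eliminating v0 keeps the constraints not involving v0 and adds the positive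
   combinations of pairs with opposite signs on v0; the other indices of the
   finite family [I + I * I] carry the trivial constraint [0 <= 0]. *)
Definition eliminate (j : I + I * I) : constraint :=
  match j with
  | inl i => if (F i).1 v0 == 0 then F i else (fun=> 0, 0)
  | inr (i, i') => if (0 < (F i).1 v0) && ((F i').1 v0 < 0)
                   then pair_comb (F i) (F i') else (fun=> 0, 0)
  end.

Lemma eliminate_coef0 j : (eliminate j).1 v0 = 0.
Proof.
case: j => [i|[i i']] /=; first by case: eqP.
by case: ifP => //= _; rewrite mulNr mulrC addNr.
Qed.

Lemma eliminate_consequence j : conic_consequence F (eliminate j).
Proof.
case: j => [i|[i i']] /=.
  by case: ifP => _; [apply: conic_consequence_mem|apply: conic_consequence0].
case: ifP => [/andP[pos neg]|_]; last exact: conic_consequence0.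
by apply: conic_consequence_lincomb; rewrite ?oppr_ge0 ?ltW //; apply: conic_consequence_mem.
Qed.

Lemma separating_point (P N : pred I) (lo up : I -> R) :
  (forall i i', P i -> N i' -> lo i <= up i') ->
  exists x, (forall i, P i -> lo i <= x) /\ (forall i', N i' -> x <= up i').
Proof.
move=> lo_up; case: (pickP P) => [i0 Pi0|P0].
  case: (@arg_maxP _ _ _ i0 P lo Pi0) => i Pi maxi.
  by exists (lo i); split=> [|i' Ni']; [exact: maxi|exact: lo_up].
case: (pickP N) => [i0 Ni0|N0]; last by exists 0; split=> i; rewrite ?P0 ?N0.
case: (@arg_minP _ _ _ i0 N up Ni0) => i Ni mini.
by exists (up i); split=> [i'|]; [rewrite P0|exact: mini].
Qed.

Lemma eliminate_extend z : (forall j, satisfies z (eliminate j)) ->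
  exists x, forall i, satisfies (update z x) (F i).
Proof.
move=> zsat; pose a i := (F i).1 v0; pose lo i := rest (F i) z / a i.
have [|x [xlo xup]] := @separating_point (fun i => 0 < a i) (fun i => a i < 0) lo lo.
  move=> i i' /= pos neg; have := zsat (inr (i, i')).
  rewrite satisfiesE eliminate_coef0 mul0r /= pos neg /= /pair_comb rest_lincomb.
  by rewrite /lo ler_pdivrMr // mulrAC ler_ndivlMr // /a; lra.
exists x => i; rewrite satisfiesE rest_update /update eqxx.
case: (ltrgtP (a i) 0) => [neg|pos|zero].
- by have := xup i neg; rewrite /lo ler_ndivlMr // mulrC.
- by have := xlo i pos; rewrite /lo ler_pdivrMr // mulrC.
- by have := zsat (inl i); rewrite /= -/(a i) zero eqxx satisfiesE -/(a i) zero !mul0r.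
Qed.

End Elimination.

Lemma fourier_motzkin (vs : seq V) (I : finType) (F : I -> constraint) :
  (forall i v, v \notin vs -> (F i).1 v = 0) ->
  (exists z, forall i, satisfies z (F i)) \/
  (exists2 c, conic_consequence F c & (forall v, c.1 v = 0) /\ 0 < c.2).
Proof.
elim: vs I F => [|v0 vs IH] I F supp.
  have [[i pos]|nopos] := boolp.pselect (exists i, 0 < (F i).2).
    right; exists (F i); first exact: conic_consequence_mem.
    by split=> // v; apply: supp.
  left; exists (fun=> 0) => i; rewrite /satisfies big1 => [|v _]; last by rewrite mulr0.
  by rewrite leNgt; apply/negP => pos; apply: nopos; exists i.
have supp' j v : v \notin vs -> (eliminate v0 F j).1 v = 0.
  move=> vvs; have [->|vv0] := eqVneq v v0; first exact: eliminate_coef0.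
  have vnot : v \notin v0 :: vs by rewrite in_cons negb_or vv0.
  case: j => [i|[i i']] /=; first by case: ifP => // _; apply: supp.
  by case: ifP => //= _; rewrite !(supp _ _ vnot) !mulr0 addr0.
case: (IH _ _ supp') => [[z zsat]|[c cons c0]].
  by left; have [x xsat] := eliminate_extend zsat; exists (update v0 z x).
by right; exists c => //; apply: conic_consequence_trans cons; apply: eliminate_consequence.
Qed.

Theorem farkas (I : finType) (F : I -> constraint) :
  (exists z, forall i, satisfies z (F i)) \/
  (exists lam : I -> R, [/\ forall i, 0 <= lam i,
     forall v, \sum_i lam i * (F i).1 v = 0 & 0 < \sum_i lam i * (F i).2]).
Proof.
have [|sol|[c [lam [lam0 lam1 lam2]] [c0 c2]]] := @fourier_motzkin (enum V) I F.
- by move=> i v; rewrite mem_enum.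
- by left.
- by right; exists lam; split=> // [v|]; [rewrite -lam1 c0|exact: lt_le_trans lam2].
Qed.

End FourierMotzkin.

Section ScalarFunctional.
Variables (R : pzRingType) (U : lmodType R) (f : U -> R).
Hypothesis f_scalar : scalar f.

Lemma scalarfB x y : f (x - y) = f x - f y.
Proof. exact: (zmod_morphism_linear f_scalar x y). Qed.

Lemma scalarf0 : f 0 = 0.
Proof. by rewrite -(subrr 0) scalarfB subrr. Qed.

Lemma scalarfN x : f (- x) = - f x.
Proof. by rewrite -sub0r scalarfB scalarf0 sub0r. Qed.

Lemma scalarfD x y : f (x + y) = f x + f y.
Proof. by rewrite -{1}[y]opprK scalarfB scalarfN opprK. Qed.

Lemma scalarfZ l x : f (l *: x) = l * f x.
Proof. exact: (scalable_linear f_scalar l x). Qed.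

Lemma scalar_opp : scalar (fun x => - f x).
Proof. by move=> l x y; rewrite scalarfD scalarfZ opprD mulrN. Qed.

End ScalarFunctional.

Section Polyhedron.
Variables (R : realType) (V : lmodType R) (I : finType) (a : I -> V -> R).
Hypothesis a_scalar : forall i, scalar (a i).

Definition polyhedron (be : I -> R) : set V := [set z | forall i, be i <= a i z].

Lemma polyhedronZ be l z : 0 <= l -> polyhedron be z ->
  polyhedron (fun i => l * be i) (l *: z).
Proof. by move=> l0 zP i; rewrite scalarfZ // ler_wpM2l. Qed.

Lemma polyhedronVZ be l z : 0 < l -> polyhedron (fun i => l * be i) z ->
  polyhedron be (l^-1 *: z).
Proof. by move=> l0 zP i; rewrite scalarfZ // ler_pdivlMl. Qed.

Lemma rec_cone_polyhedron be : polyhedron be !=set0 ->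
  rec_cone (polyhedron be) = polyhedron (fun=> 0).
Proof.
move=> [z zP]; apply/seteqP; split=> [d drec i|d drec y yP l l0 i].
  rewrite leNgt; apply/negP => neg.
  pose l := (a i z - be i + 1) / - a i d.
  have l0 : 0 <= l by apply: divr_ge0; have := zP i; lra.
  have := drec z zP l l0 i; rewrite scalarfD // scalarfZ //.
  have -> : l * a i d = - (a i z - be i + 1).
    by rewrite /l mulrAC invrN mulrN mulfK ?lt_eqF.
  lra.
by rewrite scalarfD // scalarfZ //; have := yP i; have := drec i; nra.
Qed.

Definition slack_count be z := #|[set i | be i < a i z]%SET|.

Lemma move_to_face be z d : polyhedron be z ->
  (forall i, a i z = be i -> a i d = 0) -> (exists i, 0 < a i d) ->
  exists2 s, 0 < s &
    polyhedron be (z - s *: d) /\ (slack_count be (z - s *: d) < slack_count be z)%N.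
Proof.
move=> zP tight [i0 di0].
pose ratio i := (a i z - be i) / a i d.
case: (@arg_minP _ _ _ i0 (fun i => 0 < a i d) ratio di0) => j dj jmin.
have slack_j : be j < a j z.
  rewrite lt_neqAle zP andbT; apply: contraTneq dj => /esym/tight ->.
  by rewrite ltxx.
have ratio_j : 0 < ratio j by rewrite divr_gt0 // subr_gt0.
exists (ratio j) => //; split.
  move=> i; rewrite scalarfB // scalarfZ //; have := zP i.
  have [di|di] := ltP 0 (a i d); last by nra.
  by have := jmin i di; rewrite -(ler_pM2r di) {2}/ratio divfK ?gt_eqF //; lra.
apply: proper_card; apply/properP; split.
  apply/fintype.subsetP => i; rewrite !inE scalarfB // scalarfZ // => lt.
  rewrite lt_neqAle zP andbT; apply: contraTneq lt => /[dup] /esym/tight ->.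
  by rewrite mulr0 subr0 => ->; rewrite ltxx.
exists j; first by rewrite inE.
by rewrite inE scalarfB // scalarfZ // /ratio divfK ?gt_eqF // opprB addrC subrK ltxx.
Qed.

Section ExtremePointBound.
Variables (be : I -> R) (phi : V -> R) (alpha : R).
Hypothesis phi_scalar : scalar phi.
Hypothesis pointed : forall d, (forall i, a i d = 0) -> d = 0.
Hypothesis phi_rec : forall d, polyhedron (fun=> 0) d -> 0 <= phi d.
Hypothesis phi_extreme : forall e, extreme_point (polyhedron be) e -> alpha <= phi e.

Lemma descend z d : polyhedron be z -> (forall i, a i z = be i -> a i d = 0) ->
  d != 0 -> 0 <= phi d ->
  exists z', [/\ polyhedron be z', (slack_count be z' < slack_count be z)%N & phi z' <= phi z].
Proof.
move=> zP tight d0 phid.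
have [[i di]|nopos] := boolp.pselect (exists i, 0 < a i d).
  have [s s0 [z'P lt]] := move_to_face zP tight (ex_intro _ i di).
  exists (z - s *: d); split=> //.
  by rewrite scalarfB // scalarfZ // gerBl mulr_ge0 // ltW.
have drec : polyhedron (fun=> 0) (- d).
  move=> i; rewrite scalarfN // oppr_ge0 leNgt; apply/negP => di.
  by apply: nopos; exists i.
have [i di] : exists i, 0 < a i (- d).
  apply/boolp.not_existsP => none; move/negP: d0; apply.
  rewrite -oppr_eq0 (pointed (d := - d)) // => i.
  by apply/eqP; rewrite eq_le drec andbT leNgt; apply/negP/none.
have tight' k : a k z = be k -> a k (- d) = 0.
  by move/tight; rewrite scalarfN // => ->; rewrite oppr0.
have [s s0 [z'P lt]] := move_to_face zP tight' (ex_intro _ i di).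
exists (z - s *: - d); split=> //.
by rewrite scalarfB // scalarfZ // gerBl (mulr_ge0 (ltW s0) (phi_rec drec)).
Qed.

Lemma descend_nonextreme z : polyhedron be z -> ~ extreme_point (polyhedron be) z ->
  exists z', [/\ polyhedron be z', (slack_count be z' < slack_count be z)%N
    & phi z' <= phi z].
Proof.
move=> zP notext.
have [y [w [yP wP [l [l0 l1 zE yw]]]]] : exists y w, [/\ polyhedron be y, polyhedron be w &
    exists l, [/\ 0 < l, l < 1, z = l *: y + (1 - l) *: w & y != w]].
  apply: contra_notP notext => none; split=> // y w yP wP l l0 l1 zE.
  by apply/eqP/negP => /negP yw; apply: none; exists y, w; split=> //; exists l.
have tight i : a i z = be i -> a i (y - w) = 0.
  rewrite scalarfB // zE scalarfD // !scalarfZ // => zi.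
  have := yP i; have := wP i; nra.
have tight' i : a i z = be i -> a i (w - y) = 0.
  by move/tight; rewrite -[w - y]opprB scalarfN // => ->; rewrite oppr0.
have [phi_ge|/ltW phi_le] := leP 0 (phi (y - w)).
  by apply: descend tight _ phi_ge; rewrite // subr_eq0.
apply: descend tight' _ _; rewrite // ?subr_eq0 1?eq_sym //.
by rewrite -opprB scalarfN // oppr_ge0.
Qed.

(* Induction on the number of slack constraints: a non-extreme point lies on a
   segment, and moving along it in a direction where phi does not increase makes
   a new constraint tight. *)
Lemma extreme_point_bound z : polyhedron be z -> alpha <= phi z.
Proof.
move: {2}(slack_count be z) (leqnn (slack_count be z)) => n.
elim: n z => [|n IH] z zn zP;
  (have [|notext] := boolp.pselect (extreme_point (polyhedron be) z); first exact: phi_extreme);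
  have [z' [z'P lt le]] := descend_nonextreme zP notext.
  by move: (leq_trans lt zn).
by apply: le_trans le; apply: IH z'P; rewrite -ltnS (leq_trans lt zn).
Qed.

End ExtremePointBound.
End Polyhedron.

Section PointedPolyhedron.
Variables (R : realType) (V : lmodType R) (I : finType).
Variables (a : I -> V -> R) (be : I -> R) (gauge : V -> R).
Hypothesis a_scalar : forall i, scalar (a i).
Hypothesis gauge_scalar : scalar gauge.
Hypothesis gauge_ge0 : forall d, polyhedron a (fun=> 0) d -> 0 <= gauge d.
Hypothesis gauge_eq0 : forall d, polyhedron a (fun=> 0) d -> gauge d = 0 -> d = 0.
Hypothesis P_neq0 : polyhedron a be !=set0.

Local Notation P := (polyhedron a be).
Local Notation C := (polyhedron a (fun=> 0)).

Lemma pointed d : (forall i, a i d = 0) -> d = 0.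
Proof.
move=> d0; have Cd : C d by move=> i; rewrite d0.
have Cnd : C (- d) by move=> i; rewrite scalarfN // d0 oppr0.
apply: gauge_eq0 => //; apply/eqP; rewrite eq_le gauge_ge0 // andbT.
by rewrite -oppr_ge0 -scalarfN // gauge_ge0.
Qed.

Definition section_coef (j : I + bool) : V -> R :=
  match j with inl i => a i | inr true => gauge | inr false => fun z => - gauge z end.

Definition section_rhs (j : I + bool) : R :=
  match j with inl _ => 0 | inr true => 1 | inr false => -1 end.

Local Notation S := (polyhedron section_coef section_rhs).

Lemma section_coef_scalar j : scalar (section_coef j).
Proof.
case: j => [i|[]] l x y /=; rewrite ?scalarfD ?scalarfZ //.
by rewrite opprD mulrN.
Qed.

Lemma cross_sectionE d : S d <-> C d /\ gauge d = 1.
Proof.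
split=> [Sd|[Cd g1] [i|[]] /=]; rewrite ?g1 //.
split=> [i|]; first exact: (Sd (inl i)).
by have := Sd (inr true); have := Sd (inr false); rewrite /=; lra.
Qed.

Lemma cross_section_normalize d : C d -> 0 < gauge d -> S ((gauge d)^-1 *: d).
Proof.
move=> Cd g0; apply/cross_sectionE; split; last by rewrite scalarfZ // mulVf ?gt_eqF.
by move=> i; rewrite scalarfZ //; apply: mulr_ge0; [rewrite invr_ge0 ltW|apply: Cd].
Qed.

Lemma extreme_point_cross_section e : extreme_point S e ->
  extreme_ray (rec_cone P) e.
Proof.
move=> [Se e_ext]; have [Ce ge] := (cross_sectionE e).1 Se.
have split_mul d1 d2 : C d1 -> C d2 -> e = d1 + d2 -> d1 = gauge d1 *: e.
  move=> Cd1 Cd2 e12; have g12 : gauge d1 + gauge d2 = 1 by rewrite -scalarfD // -e12.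
  have [g1|g1] := eqVneq (gauge d1) 0; first by rewrite g1 scale0r (gauge_eq0 Cd1 g1).
  have [g2|g2] := eqVneq (gauge d2) 0.
    have g1' : gauge d1 = 1 by rewrite -g12 g2 addr0.
    by rewrite e12 (gauge_eq0 Cd2 g2) addr0 g1' scale1r.
  have g1_pos : 0 < gauge d1 by rewrite lt_neqAle eq_sym g1 gauge_ge0.
  have g2_pos : 0 < gauge d2 by rewrite lt_neqAle eq_sym g2 gauge_ge0.
  have d_norm d : gauge d != 0 -> d = gauge d *: ((gauge d)^-1 *: d).
    by move=> gd; rewrite scalerA mulfV ?scale1r.
  have n12 : (gauge d1)^-1 *: d1 = (gauge d2)^-1 *: d2.
    apply: (e_ext _ _ (cross_section_normalize Cd1 g1_pos)
             (cross_section_normalize Cd2 g2_pos) (gauge d1)) => //; first lra.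
    have -> : 1 - gauge d1 = gauge d2 by lra.
    by rewrite -!d_norm.
  have en : e = (gauge d1)^-1 *: d1.
    by rewrite e12 {1}(d_norm _ g1) (d_norm _ g2) -n12 -scalerDl g12 scale1r.
  by rewrite en -(d_norm _ g1).
rewrite /extreme_ray rec_cone_polyhedron //; split=> //; split.
  by apply: contra_eqN ge => /eqP ->; rewrite (scalarf0 gauge_scalar) eq_sym oner_eq0.
move=> d1 d2 Cd1 Cd2 e12; split.
  by exists (gauge d1); split; [exact: gauge_ge0 Cd1|exact: split_mul Cd1 Cd2 e12].
exists (gauge d2); split; first exact: gauge_ge0 Cd2.
by apply: split_mul Cd2 Cd1 _; rewrite addrC.
Qed.

Lemma rec_ge0_of_extreme_rays phi : scalar phi ->
  (forall d, extreme_ray (rec_cone P) d -> 0 <= phi d) -> forall d, C d -> 0 <= phi d.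
Proof.
move=> phi_scalar phi_rays d Cd.
have [g0|g0] := eqVneq (gauge d) 0; first by rewrite (gauge_eq0 Cd g0) scalarf0.
have g_pos : 0 < gauge d by rewrite lt_neqAle eq_sym g0 gauge_ge0.
suff : 0 <= phi ((gauge d)^-1 *: d) by rewrite scalarfZ // pmulr_rge0 ?invr_gt0.
apply: (extreme_point_bound section_coef_scalar phi_scalar _ _ _
  (cross_section_normalize Cd g_pos)).
- by move=> d' d'0; apply: pointed => i; apply: d'0 (inl i).
- move=> d' Cd'; have Cd'a : C d' by move=> i; apply: Cd' (inl i).
  have := Cd' (inr true); have := Cd' (inr false); rewrite /= => g1 g2.
  by rewrite (gauge_eq0 Cd'a) ?scalarf0 //; lra.
- by move=> e /extreme_point_cross_section; apply: phi_rays.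
Qed.

Theorem minkowski_weyl_bound phi alpha : scalar phi ->
  (forall e, extreme_point P e -> alpha <= phi e) ->
  (forall d, extreme_ray (rec_cone P) d -> 0 <= phi d) ->
  forall z, P z -> alpha <= phi z.
Proof.
move=> phi_scalar phi_ext phi_rays.
apply: (extreme_point_bound a_scalar phi_scalar pointed _ phi_ext).
exact: rec_ge0_of_extreme_rays.
Qed.

Lemma extreme_point_exists : exists e, extreme_point P e.
Proof.
apply/boolp.not_existsP => none; have [z Pz] := P_neq0.
suff : (1 : R) <= 0 by rewrite ler10.
apply: (@minkowski_weyl_bound (fun=> 0)) Pz => // [l x y|e /none//].
by rewrite mulr0 addr0.
Qed.

End PointedPolyhedron.

Section ColumnVectors.
Variable R : realType.
Implicit Types n : nat.

Lemma dotE n (u v : 'cV[R]_n) : dot u v = (u^T *m v) 0 0.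
Proof. by rewrite mxE; apply: eq_bigr => i _; rewrite mxE. Qed.

Lemma dotC n (u v : 'cV[R]_n) : dot u v = dot v u.
Proof. by apply: eq_bigr => i _; rewrite mulrC. Qed.

Lemma dotDl n (u v w : 'cV[R]_n) : dot (u + v) w = dot u w + dot v w.
Proof. by rewrite /dot -big_split; apply: eq_bigr => i _; rewrite mxE mulrDl. Qed.

Lemma dotZl n l (u v : 'cV[R]_n) : dot (l *: u) v = l * dot u v.
Proof. by rewrite /dot mulr_sumr; apply: eq_bigr => i _; rewrite mxE mulrA. Qed.

Lemma dotNl n (u v : 'cV[R]_n) : dot (- u) v = - dot u v.
Proof. by rewrite -scaleN1r dotZl mulN1r. Qed.

Lemma dotBl n (u v w : 'cV[R]_n) : dot (u - v) w = dot u w - dot v w.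
Proof. by rewrite dotDl dotNl. Qed.

Lemma dotDr n (u v w : 'cV[R]_n) : dot u (v + w) = dot u v + dot u w.
Proof. by rewrite dotC dotDl !(dotC u). Qed.

Lemma dotZr n l (u v : 'cV[R]_n) : dot u (l *: v) = l * dot u v.
Proof. by rewrite dotC dotZl dotC. Qed.

Lemma dot0l n (v : 'cV[R]_n) : dot 0 v = 0.
Proof. by rewrite -(scale0r 0) dotZl mul0r. Qed.

Lemma dot0r n (u : 'cV[R]_n) : dot u 0 = 0.
Proof. by rewrite dotC dot0l. Qed.

Lemma dot_mulmx n n' (u : 'cV[R]_n) (M : 'M[R]_(n, n')) v :
  dot u (M *m v) = dot (M^T *m u) v.
Proof. by rewrite !dotE trmx_mul trmxK mulmxA. Qed.

Lemma ler_dot2l n (w u v : 'cV[R]_n) : nonneg w -> lev u v -> dot w u <= dot w v.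
Proof.
move=> w0 uv; apply: ler_sum => i _; apply: ler_wpM2l (uv i).
by have := w0 i; rewrite mxE.
Qed.

Lemma ler_dot2r n (w u v : 'cV[R]_n) : nonneg w -> lev u v -> dot u w <= dot v w.
Proof. by move=> w0 uv; rewrite !(dotC _ w) ler_dot2l. Qed.

Lemma nonnegP n (u : 'cV[R]_n) : nonneg u <-> forall i, 0 <= u i 0.
Proof. by split=> u0 i; have := u0 i; rewrite mxE. Qed.

Lemma psum_col_eq0 n (u : 'cV[R]_n) :
  (forall i, 0 <= u i 0) -> \sum_i u i 0 = 0 -> u = 0.
Proof.
move=> u0 /psumr_eq0P u_eq0; apply/matrixP => i j.
by rewrite ord1 mxE u_eq0.
Qed.

Lemma scale_regularE l (x : R^o) : l *: x = l * x.
Proof. by []. Qed.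

Lemma lev_col_mx n n' (u v : 'cV[R]_n) (u' v' : 'cV[R]_n') :
  lev (col_mx u u') (col_mx v v') <-> lev u v /\ lev u' v'.
Proof.
split=> [uv|[uv uv'] i]; last first.
  by case: (split_ordP i) => j ->; rewrite ?col_mxEu ?col_mxEd.
by split=> i; [have := uv (lshift _ i)|have := uv (rshift _ i)];
  rewrite ?col_mxEu ?col_mxEd.
Qed.

Lemma nonneg_col_mx n n' (u : 'cV[R]_n) (u' : 'cV[R]_n') :
  nonneg (col_mx u u') <-> nonneg u /\ nonneg u'.
Proof. by rewrite /nonneg -lev_col_mx col_mx0. Qed.

Lemma dot_col_mx n n' (u v : 'cV[R]_n) (u' v' : 'cV[R]_n') :
  dot (col_mx u u') (col_mx v v') = dot u v + dot u' v'.
Proof.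
by rewrite /dot big_split_ord; congr (_ + _); apply: eq_bigr => i _;
  rewrite ?col_mxEu ?col_mxEd.
Qed.

Lemma col_mx_split n n' (u : 'cV[R]_(n + n')) : exists u1 u2, u = col_mx u1 u2.
Proof. by exists (usubmx u), (dsubmx u); rewrite vsubmxK. Qed.

Lemma dot1 (u v : 'cV[R]_1) : dot u v = u 0 0 * v 0 0.
Proof. by rewrite /dot big_ord1. Qed.

Lemma lev1 (u v : 'cV[R]_1) : lev u v <-> u 0 0 <= v 0 0.
Proof. by split=> [/(_ 0)//|uv i]; rewrite ord1. Qed.

Lemma mulmx_cV1 n (u : 'cV[R]_n) (w : 'cV[R]_1) : u *m w = w 0 0 *: u.
Proof.
by apply/matrixP => i j; rewrite ord1 !mxE big_ord1 mulrC.
Qed.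

Theorem farkas_mx k n (M : 'M[R]_(k, n)) (c : 'cV[R]_k) :
  (exists z, lev c (M *m z)) \/
  (exists lam, [/\ nonneg lam, M^T *m lam = 0 & 0 < dot lam c]).
Proof.
have [[z zsat]|[lam [lam0 lamM lamc]]] :=
  farkas (fun i : 'I_k => (fun j => M i j, c i 0)).
  left; exists (\col_j z j) => i; rewrite mxE.
  by rewrite (eq_bigr (fun j => M i j * z j)) => [|j _]; [apply: zsat|rewrite mxE].
right; exists (\col_i lam i); split.
- by move=> i; rewrite !mxE.
- apply/matrixP => j j'; rewrite ord1 !mxE -[RHS](lamM j).
  by apply: eq_bigr => i _; rewrite !mxE mulrC.
- by rewrite /dot; under eq_bigr do rewrite mxE.
Qed.

End ColumnVectors.

Section Reformulation.
Variables (R : realType) (n1 n2 m p q r : nat).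
Variables (cx : 'cV[R]_n1) (I : {set 'I_n1})
  (A : 'M[R]_(m, n1)) (B : 'M[R]_(m, n2)) (b : 'cV[R]_m)
  (cy d : 'cV[R]_n2) (Gxy : 'M[R]_(p, n1)) (Gy : 'M[R]_(p, n2)) (hy : 'cV[R]_p)
  (Kpsi : 'M[R]_(q, m)) (Ks : 'M[R]_(q, r)) (Kx : 'M[R]_(q, n1)) (k : 'cV[R]_q).

Local Notation V1 := ('cV[R]_n2 * 'cV[R]_q)%type.
Local Notation V2 := ('cV[R]_m * 'cV[R]_p * R^o)%type.

Definition P1_coef (j : 'I_n2 + 'I_q + 'I_m + 'I_r) (z : V1) : R :=
  match j with
  | inl (inl (inl i)) => z.1 i 0
  | inl (inl (inr i)) => z.2 i 0
  | inl (inr i) => (B *m z.1 - Kpsi^T *m z.2) i 0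
  | inr i => - (Ks^T *m z.2) i 0
  end.

Definition P1_rhs (j : 'I_n2 + 'I_q + 'I_m + 'I_r) : R :=
  match j with inl (inr i) => b i 0 | inr _ => -1 | _ => 0 end.

Definition P2_coef (j : 'I_m + 'I_p + unit + 'I_n2) (z : V2) : R :=
  match j with
  | inl (inl (inl i)) => z.1.1 i 0
  | inl (inl (inr i)) => z.1.2 i 0
  | inl (inr _) => z.2
  | inr i => (z.2 *: d - (B^T *m z.1.1 + Gy^T *m z.1.2)) i 0
  end.

Definition P2_rhs (j : 'I_m + 'I_p + unit + 'I_n2) : R :=
  match j with inr i => - cy i 0 | _ => 0 end.

Lemma P1_coef_scalar j : scalar (P1_coef j).
Proof.
by move=> l z z'; case: j => [[[i|i]|i]|i]; rewrite /= ?mulmxDr -?scalemxAr !mxE //; ring.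
Qed.

Lemma P2_coef_scalar j : scalar (P2_coef j).
Proof.
move=> l z z'; case: j => [[[i|i]|i]|i];
  by rewrite /= ?mulmxDr -?scalemxAr ?scalerDl ?mxE ?scale_regularE //; ring.
Qed.

Lemma P1_scaledE w z : polyhedron P1_coef (fun j => w * P1_rhs j) z <->
  [/\ nonneg z.1, nonneg z.2, lev (w *: b) (B *m z.1 - Kpsi^T *m z.2)
    & lev (Ks^T *m z.2) (w *: ones R r)].
Proof.
split=> [zP|[/nonnegP z1 /nonnegP z2 zb zK] [[[i|i]|i]|i]] /=; rewrite ?mulr0 //.
  split.
  - by apply/nonnegP => i; have := zP (inl (inl (inl i))); rewrite /= mulr0.
  - by apply/nonnegP => i; have := zP (inl (inl (inr i))); rewrite /= mulr0.
  - by move=> i; have := zP (inl (inr i)); rewrite /= [(w *: b) i 0]mxE.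
  - by move=> i; have := zP (inr i); rewrite /= !mxE; lra.
- by have := zb i; rewrite mxE.
- by have := zK i; rewrite !mxE; lra.
Qed.

Lemma P2_scaledE th z : polyhedron P2_coef (fun j => th * P2_rhs j) z <->
  [/\ nonneg z.1.1, nonneg z.1.2, 0 <= z.2
    & lev (B^T *m z.1.1 + Gy^T *m z.1.2) (z.2 *: d + th *: cy)].
Proof.
split=> [zP|[/nonnegP z1 /nonnegP z2 z3 zc] [[[i|i]|[]]|i]] /=; rewrite ?mulr0 //.
  split.
  - by apply/nonnegP => i; have := zP (inl (inl (inl i))); rewrite /= mulr0.
  - by apply/nonnegP => i; have := zP (inl (inl (inr i))); rewrite /= mulr0.
  - by have := zP (inl (inr tt)); rewrite /= mulr0.
  - by move=> i; have := zP (inr i); rewrite /= !mxE; lra.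
by have := zc i; rewrite !mxE; lra.
Qed.

Lemma P1E : P1 B b Kpsi Ks = polyhedron P1_coef P1_rhs.
Proof.
have -> : P1_rhs = (fun j => 1 * P1_rhs j) by apply/funext => j; rewrite mul1r.
apply/seteqP; split=> z; first by move=> [z1 [z2 [zb zK]]]; apply/P1_scaledE; rewrite !scale1r.
by move=> /P1_scaledE[z1 z2]; rewrite !scale1r.
Qed.

Lemma P2E : P2 B cy d Gy = polyhedron P2_coef P2_rhs.
Proof.
have -> : P2_rhs = (fun j => 1 * P2_rhs j) by apply/funext => j; rewrite mul1r.
apply/seteqP; split=> z; first by move=> [z1 [z2 [z3 zc]]]; apply/P2_scaledE; rewrite scale1r.
by move=> /P2_scaledE[z1 z2 z3]; rewrite scale1r.
Qed.

Definition P1_gauge (z : V1) := \sum_i z.1 i 0 + \sum_i z.2 i 0.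

Definition P2_gauge (z : V2) := \sum_i z.1.1 i 0 + \sum_i z.1.2 i 0 + z.2.

Lemma P1_gauge_scalar : scalar P1_gauge.
Proof.
move=> l z z'; rewrite /P1_gauge /=.
under eq_bigr do rewrite !mxE; under [X in _ + X]eq_bigr do rewrite !mxE.
by rewrite !big_split /= -!mulr_sumr; ring.
Qed.

Lemma P2_gauge_scalar : scalar P2_gauge.
Proof.
move=> l z z'; rewrite /P2_gauge /= scale_regularE.
under eq_bigr do rewrite !mxE; under [X in _ + X + _]eq_bigr do rewrite !mxE.
by rewrite !big_split /= -!mulr_sumr; ring.
Qed.

Lemma P1_gauge_ge0 z : polyhedron P1_coef (fun=> 0) z -> 0 <= P1_gauge z.
Proof.
move=> zC; rewrite addr_ge0 // sumr_ge0 // => i _.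
  exact: zC (inl (inl (inl i))).
exact: zC (inl (inl (inr i))).
Qed.

Lemma P1_gauge_eq0 z : polyhedron P1_coef (fun=> 0) z -> P1_gauge z = 0 -> z = 0.
Proof.
case: z => z1 z2 zC; rewrite /P1_gauge /= => /eqP.
have z1_ge0 i : 0 <= z1 i 0 := zC (inl (inl (inl i))).
have z2_ge0 i : 0 <= z2 i 0 := zC (inl (inl (inr i))).
rewrite paddr_eq0 ?sumr_ge0 // => /andP[/eqP s1 /eqP s2].
by rewrite (psum_col_eq0 z1_ge0 s1) (psum_col_eq0 z2_ge0 s2).
Qed.

Lemma P2_gauge_ge0 z : polyhedron P2_coef (fun=> 0) z -> 0 <= P2_gauge z.
Proof.
move=> zC; rewrite !addr_ge0 ?sumr_ge0 // => [i _|i _|]; last exact: zC (inl (inr tt)).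
  exact: zC (inl (inl (inl i))).
exact: zC (inl (inl (inr i))).
Qed.

Lemma P2_gauge_eq0 z : polyhedron P2_coef (fun=> 0) z -> P2_gauge z = 0 -> z = 0.
Proof.
case: z => [[z1 z2] w] zC; rewrite /P2_gauge /= => /eqP.
have z1_ge0 i : 0 <= z1 i 0 := zC (inl (inl (inl i))).
have z2_ge0 i : 0 <= z2 i 0 := zC (inl (inl (inr i))).
have w_ge0 : 0 <= w := zC (inl (inr tt)).
rewrite !paddr_eq0 ?addr_ge0 ?sumr_ge0 // => /andP[/andP[/eqP s1 /eqP s2] /eqP ->].
by rewrite (psum_col_eq0 z1_ge0 s1) (psum_col_eq0 z2_ge0 s2).
Qed.

Hypothesis P1_neq0 : P1 B b Kpsi Ks !=set0.
Hypothesis P2_neq0 : P2 B cy d Gy !=set0.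

Local Notation J1 := (J1 B b Kpsi Ks).
Local Notation R1 := (R1 B b Kpsi Ks).
Local Notation J2 := (J2 B cy d Gy).
Local Notation R2 := (R2 B cy d Gy).

Lemma P1_polyhedron_neq0 : polyhedron P1_coef P1_rhs !=set0.
Proof. by rewrite -P1E. Qed.

Lemma P2_polyhedron_neq0 : polyhedron P2_coef P2_rhs !=set0.
Proof. by rewrite -P2E. Qed.

Lemma P1_bound phi alpha : scalar phi ->
  (forall e, J1 e -> alpha <= phi e) -> (forall d, R1 d -> 0 <= phi d) ->
  forall z, polyhedron P1_coef P1_rhs z -> alpha <= phi z.
Proof.
rewrite /Defs.J1 /Defs.R1 P1E.
exact: (minkowski_weyl_bound P1_coef_scalar P1_gauge_scalar P1_gauge_ge0 P1_gauge_eq0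
  P1_polyhedron_neq0).
Qed.

Lemma P2_bound phi alpha : scalar phi ->
  (forall e, J2 e -> alpha <= phi e) -> (forall d, R2 d -> 0 <= phi d) ->
  forall z, polyhedron P2_coef P2_rhs z -> alpha <= phi z.
Proof.
rewrite /Defs.J2 /Defs.R2 P2E.
exact: (minkowski_weyl_bound P2_coef_scalar P2_gauge_scalar P2_gauge_ge0 P2_gauge_eq0
  P2_polyhedron_neq0).
Qed.

Lemma P1_rec_bound phi : scalar phi -> (forall d, R1 d -> 0 <= phi d) ->
  forall z, polyhedron P1_coef (fun=> 0) z -> 0 <= phi z.
Proof.
rewrite /Defs.R1 P1E.
exact: (rec_ge0_of_extreme_rays P1_coef_scalar P1_gauge_scalar P1_gauge_ge0 P1_gauge_eq0
  P1_polyhedron_neq0).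
Qed.

Lemma P2_rec_bound phi : scalar phi -> (forall d, R2 d -> 0 <= phi d) ->
  forall z, polyhedron P2_coef (fun=> 0) z -> 0 <= phi z.
Proof.
rewrite /Defs.R2 P2E.
exact: (rec_ge0_of_extreme_rays P2_coef_scalar P2_gauge_scalar P2_gauge_ge0 P2_gauge_eq0
  P2_polyhedron_neq0).
Qed.

Lemma J1_exists : exists e, J1 e.
Proof.
rewrite /Defs.J1 P1E.
exact: (extreme_point_exists P1_coef_scalar P1_gauge_scalar P1_gauge_ge0 P1_gauge_eq0
  P1_polyhedron_neq0).
Qed.

Lemma J2_exists : exists e, J2 e.
Proof.
rewrite /Defs.J2 P2E.
exact: (extreme_point_exists P2_coef_scalar P2_gauge_scalar P2_gauge_ge0 P2_gauge_eq0
  P2_polyhedron_neq0).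
Qed.

Lemma J1_P1 e : J1 e -> polyhedron P1_coef P1_rhs e.
Proof. by rewrite /Defs.J1 P1E => -[]. Qed.

Lemma J2_P2 e : J2 e -> polyhedron P2_coef P2_rhs e.
Proof. by rewrite /Defs.J2 P2E => -[]. Qed.

Lemma R1_rec r1 : R1 r1 -> polyhedron P1_coef (fun=> 0) r1.
Proof.
by rewrite /Defs.R1 P1E (rec_cone_polyhedron P1_coef_scalar P1_polyhedron_neq0) => -[].
Qed.

Lemma R2_rec r2 : R2 r2 -> polyhedron P2_coef (fun=> 0) r2.
Proof.
by rewrite /Defs.R2 P2E (rec_cone_polyhedron P2_coef_scalar P2_polyhedron_neq0) => -[].
Qed.

Lemma R2_ge0 r2 : R2 r2 -> 0 <= r2.2.
Proof. by move/R2_rec/(_ (inl (inr tt))). Qed.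

Local Notation dualterm := (dualterm A b Gxy hy).
Local Notation lowgap := (lowgap d Kx k).
Local Notation feasible := (inner_feas A B b d Gxy Gy hy Kpsi Ks Kx k).

Lemma lowgap_scalar x : scalar (lowgap x).
Proof.
move=> l z z'; rewrite /Defs.lowgap.
have -> : (l *: z + z').1 = l *: z.1 + z'.1 by [].
have -> : (l *: z + z').2 = l *: z.2 + z'.2 by [].
by rewrite (dotDr d) (dotDl (l *: z.2)) dotZr dotZl; ring.
Qed.

Lemma dualterm_scalar x : scalar (dualterm x).
Proof.
move=> l z z'; rewrite /Defs.dualterm.
have -> : (l *: z + z').1 = l *: z.1 + z'.1 by [].
have -> : (l *: z + z').2 = l *: z.2 + z'.2 by [].
by rewrite !dotDl !dotZl; ring.
Qed.

Definition cut_value x (z2 : V2) (z1 : V1) := dualterm x z2.1 - z2.2 * lowgap x z1.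

Lemma cut_value_scalar x z1 : scalar (cut_value x ^~ z1).
Proof.
move=> l z z'; rewrite /cut_value /= (dualterm_scalar x l) scale_regularE; ring.
Qed.

Definition optimality_cut x t :=
  forall j2 j1, J2 j2 -> J1 j1 -> cut_value x j2 j1 <= t.

Definition feasibility_cuts x := [/\
  forall r1, R1 r1 -> 0 <= lowgap x r1,
  forall r2, R2 r2 -> r2.2 = 0 -> dualterm x r2.1 <= 0 &
  forall j1 r2, J1 j1 -> R2 r2 -> 0 < r2.2 -> cut_value x r2 j1 <= 0].

Lemma master_feasE x t : master_feas I A B b cy d Gxy Gy hy Kpsi Ks Kx k x t <->
  [/\ Xset I x, optimality_cut x t & feasibility_cuts x].
Proof. by split=> [[? ? ? ? ?]|[? ? []]]. Qed.

(* [(z2.1, z2.2, z1)] ranges over the feasible points of the LP dual of Inner(x),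
   with the cost vector scaled by [th]: [th = 0] gives the dual rays. *)
Lemma weak_duality x y psi s th z2 z1 : feasible x y psi s -> 0 <= th ->
  polyhedron P2_coef (fun j => th * P2_rhs j) z2 ->
  polyhedron P1_coef (fun j => z2.2 * P1_rhs j) z1 ->
  dualterm x z2.1 - lowgap x z1 <= th * dot cy y.
Proof.
case: z2 z1 => [[psi' u] w] [y' v] [[y0 psi0 s0] [c_h c_b c_d c_sd c_k]] th0.
move=> /P2_scaledE[/= psi'0 u0 w0 dual_y] /P1_scaledE[/= y'0 v0 dual_psi dual_s].
have c_d' : lev (B^T *m psi) d by move=> i; have := c_d i; rewrite !mxE; lra.
have i_b := ler_dot2l psi'0 c_b; rewrite dot_mulmx in i_b.
have i_h := ler_dot2l u0 c_h; rewrite dot_mulmx in i_h.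
have i_k := ler_dot2l v0 c_k; rewrite (dotDr v (Kpsi *m psi)) !dot_mulmx in i_k.
have i_y := ler_dot2r y0 dual_y; rewrite !dotDl !dotZl in i_y.
have i_psi := ler_dot2r psi0 dual_psi.
rewrite dotBl dotZl (dotC (B *m y')) dot_mulmx in i_psi.
have i_s := ler_dot2r s0 dual_s; rewrite dotZl in i_s.
have i_d := ler_dot2l y'0 c_d'; rewrite !(dotC y') in i_d.
have i_sd := mulr_ge0 w0 c_sd; rewrite !mulrDr !mulrN (dotC psi) (dotC s) in i_sd.
rewrite /Defs.dualterm /Defs.lowgap /=; lra.
Qed.

Lemma ray_cut x r2 j1 : feasibility_cuts x -> R2 r2 -> J1 j1 -> cut_value x r2 j1 <= 0.
Proof.
move=> [_ cut_c cut_d] r2R j1J; have := R2_ge0 r2R.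
rewrite le_eqVlt => /orP[/eqP/esym w0|w_pos]; last exact: cut_d.
by rewrite /cut_value w0 mul0r subr0; apply: cut_c.
Qed.

Lemma dual_bound x t nu z2 z1 : feasibility_cuts x -> 0 <= nu ->
  (0 < nu -> optimality_cut x t) ->
  polyhedron P2_coef (fun j => nu * P2_rhs j) z2 ->
  polyhedron P1_coef (fun j => z2.2 * P1_rhs j) z1 ->
  dualterm x z2.1 - lowgap x z1 <= nu * t.
Proof.
move=> cuts nu0 opt z2P z1P; have [cut_b _ _] := cuts.
have cut_z2 e : J1 e -> cut_value x z2 e <= nu * t.
  move=> eJ; have phi_scalar := scalar_opp (cut_value_scalar x e).
  have phi_rays r2 : R2 r2 -> 0 <= - cut_value x r2 e by move=> r2R; rewrite oppr_ge0 ray_cut.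
  have [nu_pos|nu_le0] := ltP 0 nu; last first.
    have nu_eq0 : nu = 0 by apply/le_anti; rewrite nu_le0 nu0.
    rewrite nu_eq0 mul0r -oppr_ge0; apply: (P2_rec_bound phi_scalar phi_rays) => j.
    by have := z2P j; rewrite nu_eq0 mul0r.
  have := P2_bound phi_scalar (alpha := - t) _ phi_rays (polyhedronVZ P2_coef_scalar nu_pos z2P).
  rewrite (scalarfZ (cut_value_scalar x e)) lerN2 ler_pdivrMl //; apply=> j2 j2J.
  by rewrite lerN2; apply: opt.
have w0 : 0 <= z2.2 by have := z2P (inl (inr tt)); rewrite mulr0.
have [w_pos|w_le0] := ltP 0 z2.2; last first.
  have w_eq0 : z2.2 = 0 by apply/le_anti; rewrite w_le0 w0.
  have gap0 : 0 <= lowgap x z1.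
    apply: (P1_rec_bound (lowgap_scalar x) cut_b) => j.
    by have := z1P j; rewrite w_eq0 mul0r.
  have [e eJ] := J1_exists; have := cut_z2 e eJ.
  rewrite /cut_value w_eq0 mul0r subr0; lra.
have := P1_bound (lowgap_scalar x) (alpha := (dualterm x z2.1 - nu * t) / z2.2) _ cut_b
  (polyhedronVZ P1_coef_scalar w_pos z1P).
rewrite (scalarfZ (lowgap_scalar x)) ler_pdivrMr // mulrAC mulVf ?gt_eqF // mul1r.
have lower e : J1 e -> (dualterm x z2.1 - nu * t) / z2.2 <= lowgap x e.
  by move=> eJ; rewrite ler_pdivrMr //; have := cut_z2 e eJ; rewrite /cut_value; lra.
by move=> /(_ lower); lra.
Qed.

(* Inner(x) together with the objective bound [th * c_y^T y <= t], as the system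
   [inner_rhs x t <= inner_mx th *m (y; psi; s)]; the rows are those of the five
   constraints of Inner(x), then nonnegativity, then the objective. *)
Definition inner_mx th :
    'M[R]_(p + (m + (n2 + (1 + (q + (n2 + (m + r) + 1))))), n2 + (m + r)) :=
  col_mx (row_mx Gy 0)
 (col_mx (row_mx B 0)
 (col_mx (row_mx 0 (row_mx (- B^T) 0))
 (col_mx (col_mx (- d) (col_mx b (- ones R r)))^T
 (col_mx (row_mx 0 (row_mx Kpsi Ks))
 (col_mx 1%:M (col_mx (- th *: cy) 0)^T))))).

Definition inner_rhs x t : 'cV[R]_(p + (m + (n2 + (1 + (q + (n2 + (m + r) + 1)))))) :=
  col_mx (hy - Gxy *m x)
 (col_mx (b - A *m x)
 (col_mx (- d)
 (col_mx 0
 (col_mx (k + Kx *m x)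
 (col_mx 0 (- t)%:M))))).

Lemma inner_mx_solution th x t y psi s :
  lev (inner_rhs x t) (inner_mx th *m col_mx y (col_mx psi s)) ->
  feasible x y psi s /\ th * dot cy y <= t.
Proof.
rewrite !mul_col_mx !mul_row_col !mul0mx !addr0 !add0r mul1mx mulNmx.
rewrite !lev_col_mx => -[c_h [c_b [c_d [/lev1 c_sd [c_k [/nonneg_col_mx[y0]]]]]]].
move=> /nonneg_col_mx[psi0 s0] /lev1 obj.
rewrite -(dotE (col_mx _ _)) !dot_col_mx !dotNl (dotC b) (dotC (ones R r)) mxE in c_sd.
rewrite -(dotE (col_mx _ _)) dot_col_mx dot0l addr0 dotZl mulNr mxE mulr1n in obj.
split; last by lra.
by split; split=> //; lra.
Qed.

Lemma inner_mx_certificate th x t lam : nonneg lam -> (inner_mx th)^T *m lam = 0 ->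
  0 < dot lam (inner_rhs x t) ->
  exists mu z2 z1, [/\ 0 <= mu, polyhedron P2_coef (fun j => mu * th * P2_rhs j) z2,
    polyhedron P1_coef (fun j => z2.2 * P1_rhs j) z1 &
    mu * t < dualterm x z2.1 - lowgap x z1].
Proof.
have [u [lam1 ->]] := col_mx_split lam; have [psi' [lam2 ->]] := col_mx_split lam1.
have [y' [lam3 ->]] := col_mx_split lam2; have [w [lam4 ->]] := col_mx_split lam3.
have [v [lam5 ->]] := col_mx_split lam4; have [mz [mu ->]] := col_mx_split lam5.
have [my [mz1 ->]] := col_mx_split mz; have [mpsi [ms ->]] := col_mx_split mz1.
rewrite !nonneg_col_mx => -[u0 [psi'0 [y'0 [w0 [v0 [[my0 [mpsi0 ms0]] mu0]]]]]].
rewrite /inner_mx !tr_col_mx !tr_row_mx !trmxK !trmx0 trmx1.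
rewrite raddfN /= trmxK !mul_row_col !mul_col_mx !mul0mx mul1mx !mulmx_cV1 mulNmx.
rewrite !(add_col_mx, add0r, addr0, scaler0) => /eqP.
rewrite !col_mx_eq0 => /andP[/eqP Y0 /andP[/eqP P0 /eqP S0]].
rewrite /inner_rhs !dot_col_mx !dot0r dot1 mxE eqxx mulr1n => dual_pos.
exists (mu 0 0), ((psi', u), w 0 0), (y', v); split.
- by have := mu0 0; rewrite mxE.
- apply/P2_scaledE; split=> //=; first by have := w0 0; rewrite mxE.
  move=> j; move/matrixP/(_ j 0): Y0; have := my0 j.
  by move: (B^T *m psi') (Gy^T *m u) => Bpsi' Gu; rewrite !mxE; nra.
- apply/P1_scaledE; split=> //= i.
    move/matrixP/(_ i 0): P0; have := mpsi0 i.
    by move: (B *m y') (Kpsi^T *m v) => By' Kv; rewrite !mxE; nra.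
  move/matrixP/(_ i 0): S0; have := ms0 i.
  by move: (Ks^T *m v) => Kv; rewrite !mxE; nra.
- by move: dual_pos; rewrite /Defs.dualterm /Defs.lowgap /= (dotC y') dotNl; nra.
Qed.

Lemma inner_feasible_of_dual_bound th x t :
  (forall mu z2 z1, 0 <= mu -> polyhedron P2_coef (fun j => mu * th * P2_rhs j) z2 ->
     polyhedron P1_coef (fun j => z2.2 * P1_rhs j) z1 ->
     dualterm x z2.1 - lowgap x z1 <= mu * t) ->
  exists y psi s, feasible x y psi s /\ th * dot cy y <= t.
Proof.
move=> dual_le.
have [[z zsol]|[lam [lam0 lamM lam_pos]]] := farkas_mx (inner_mx th) (inner_rhs x t).
  have [y [z1 ez]] := col_mx_split z; have [psi [s ez1]] := col_mx_split z1.
  by exists y, psi, s; apply: inner_mx_solution; rewrite -ez1 -ez.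
have [mu [z2 [z1 [mu0 z2P z1P]]]] := inner_mx_certificate lam0 lamM lam_pos.
by rewrite ltNge dual_le.
Qed.

Lemma cut_value_le_objective x y psi s th z2 j1 : feasible x y psi s -> 0 <= th ->
  polyhedron P2_coef (fun j => th * P2_rhs j) z2 -> J1 j1 ->
  cut_value x z2 j1 <= th * dot cy y.
Proof.
move=> feas th0 z2P j1J; have w0 : 0 <= z2.2 by have := z2P (inl (inr tt)); rewrite mulr0.
rewrite /cut_value -(scalarfZ (lowgap_scalar x)); apply: weak_duality feas th0 z2P _.
exact: (polyhedronZ (l := z2.2 : R) P1_coef_scalar w0 (J1_P1 j1J)).
Qed.

Lemma feasibility_cuts_of_feasible x y psi s : feasible x y psi s -> feasibility_cuts x.
Proof.
move=> feas.
have rays r2 j1 : R2 r2 -> J1 j1 -> cut_value x r2 j1 <= 0.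
  move=> /R2_rec r2C j1J; rewrite -(mul0r (dot cy y)).
  apply: cut_value_le_objective feas _ _ j1J => // j.
  by rewrite mul0r; apply: r2C.
split=> [r1 /R1_rec r1C|r2 r2R w0|j1 r2 j1J r2R _]; last exact: rays.
  have := weak_duality (z2 := (0, 0, 0)) (z1 := r1) feas (lexx 0).
  rewrite /Defs.dualterm /= !dot0l add0r sub0r mul0r oppr_le0; apply.
    by apply/P2_scaledE; split=> //= i; rewrite ?mulmx0 ?scale0r ?addr0.
  by move=> j; rewrite mul0r; apply: r1C.
have [j1 j1J] := J1_exists; have := rays _ _ r2R j1J.
by rewrite /cut_value w0 mul0r subr0.
Qed.

Local Notation fval := (fval A B b cy d Gxy Gy hy Kpsi Ks Kx k).

Lemma fval_infeasible x : ~ feasibility_cuts x -> fval x = +oo%E.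
Proof.
move=> no_cuts; apply/eqP; rewrite eq_le leey /=.
apply/ereal_infP => z [y [psi [s [feas _]]]].
by case: no_cuts; apply: feasibility_cuts_of_feasible feas.
Qed.

Lemma feasible_of_cuts x : feasibility_cuts x -> exists y psi s, feasible x y psi s.
Proof.
move=> cuts; have [|y [psi [s [feas _]]]] := @inner_feasible_of_dual_bound 0 x 0.
  move=> mu z2 z1 mu0 z2P z1P; rewrite mulr0.
  have z2C : polyhedron P2_coef (fun j => 0 * P2_rhs j) z2.
    by move=> j; have := z2P j; rewrite mulr0.
  by rewrite -(mul0r 0); apply: dual_bound cuts (lexx 0) _ z2C z1P; rewrite ltxx.
by exists y, psi, s.
Qed.

Lemma feasible_le_of_cuts x t : feasibility_cuts x -> optimality_cut x t ->
  exists y psi s, feasible x y psi s /\ dot cy y <= t.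
Proof.
move=> cuts opt; have [|y [psi [s]]] := @inner_feasible_of_dual_bound 1 x t.
  by move=> mu z2 z1 mu0; rewrite mulr1; apply: dual_bound cuts mu0 (fun=> opt).
by rewrite mul1r; exists y, psi, s.
Qed.

Lemma fval_cuts x : feasibility_cuts x ->
  exists f0 : R, fval x = f0%:E /\ (forall t, optimality_cut x t <-> f0 <= t).
Proof.
move=> cuts; pose S := [set cut_value x j2 j1 | j2 in J2 & j1 in J1].
have S_le y psi s : feasible x y psi s -> ubound S (dot cy y).
  move=> feas _ [j2 j2J [j1 j1J <-]]; rewrite -[dot cy y]mul1r.
  by apply: cut_value_le_objective feas ler01 _ j1J => j; rewrite mul1r; apply: J2_P2.
have [y0 [psi0 [s0 feas0]]] := feasible_of_cuts cuts.
have S_neq0 : S !=set0.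
  have [j1 j1J] := J1_exists; have [j2 j2J] := J2_exists.
  by exists (cut_value x j2 j1), j2 => //; exists j1.
have S_sup : has_sup S by split=> //; exists (dot cy y0); apply: S_le feas0.
have opt_sup : optimality_cut x (sup S).
  by move=> j2 j1 j2J j1J; apply: sup_upper_bound => //; exists j2 => //; exists j1.
have sup_le y psi s : feasible x y psi s -> sup S <= dot cy y.
  by move=> feas; apply: ge_sup S_neq0 (S_le _ _ _ feas).
have [y1 [psi1 [s1 [feas1 y1_le]]]] := feasible_le_of_cuts cuts opt_sup.
exists (sup S); split.
  apply/eqP; rewrite eq_le; apply/andP; split.
    by apply: ge_ereal_inf; exists (dot cy y1)%:E; [exists y1, psi1, s1|rewrite lee_fin].
  by apply/ereal_infP => _ [y [psi [s [feas ->]]]]; rewrite lee_fin; apply: sup_le feas.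
move=> t; split=> [opt|le_t j2 j1 j2J j1J]; last exact: le_trans (opt_sup _ _ j2J j1J) le_t.
have [y [psi [s [feas le]]]] := feasible_le_of_cuts cuts opt.
exact: le_trans (sup_le _ _ _ feas) le.
Qed.

Local Notation mip_val := (mip_val cx I A B b cy d Gxy Gy hy Kpsi Ks Kx k).
Local Notation master_val := (master_val cx I A B b cy d Gxy Gy hy Kpsi Ks Kx k).

Lemma mip_val_master : mip_val = master_val.
Proof.
apply/eqP; rewrite eq_le; apply/andP; split.
  apply/ereal_infP => _ [x [t [/master_feasE[xX opt cuts] ->]]].
  have [f0 [fx f0E]] := fval_cuts cuts.
  apply: ge_ereal_inf; exists ((dot cx x)%:E + fval x); first by exists x.
  by rewrite fx -EFinD lee_fin lerD2l -f0E.
apply/ereal_infP => _ [x [xX ->]].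
have [cuts|no_cuts] := boolp.pselect (feasibility_cuts x); last first.
  by rewrite fval_infeasible // addey // leey.
have [f0 [fx f0E]] := fval_cuts cuts.
apply: ge_ereal_inf; exists (dot cx x + f0)%:E; last by rewrite fx EFinD.
by exists x, f0; split=> //; apply/master_feasE; split=> //; apply/f0E.
Qed.

Lemma mip_opt_master x : mip_opt cx I A B b cy d Gxy Gy hy Kpsi Ks Kx k x <->
  master_opt cx I A B b cy d Gxy Gy hy Kpsi Ks Kx k x.
Proof.
split=> [[xX [fx_fin fx_opt]]|[t [/master_feasE[xX opt cuts] t_opt]]].
  have [cuts|no_cuts] := boolp.pselect (feasibility_cuts x); last first.
    by move: fx_fin; rewrite fval_infeasible // ltxx.
  have [f0 [fx f0E]] := fval_cuts cuts.
  exists f0; split; last by rewrite EFinD -fx fx_opt mip_val_master.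
  by apply/master_feasE; split=> //; apply/f0E.
have [f0 [fx f0E]] := fval_cuts cuts.
split=> //; split; first by rewrite fx ltey.
apply/eqP; rewrite eq_le; apply/andP; split.
  by rewrite mip_val_master -t_opt fx -EFinD lee_fin lerD2l -f0E.
by apply: ge_ereal_inf; exists ((dot cx x)%:E + fval x) => //; exists x.
Qed.

End Reformulation.

Theorem corollary1 (R : realType) (n1 n2 m p q r : nat)
  (cx : 'cV[R]_n1) (I : {set 'I_n1})
  (A : 'M[R]_(m, n1)) (B : 'M[R]_(m, n2)) (b : 'cV[R]_m)
  (cy d : 'cV[R]_n2) (Gxy : 'M[R]_(p, n1)) (Gy : 'M[R]_(p, n2)) (hy : 'cV[R]_p)
  (Kpsi : 'M[R]_(q, m)) (Ks : 'M[R]_(q, r)) (Kx : 'M[R]_(q, n1)) (k : 'cV[R]_q) :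
  P1 B b Kpsi Ks !=set0 ->
  P2 B cy d Gy !=set0 ->
  mip_val cx I A B b cy d Gxy Gy hy Kpsi Ks Kx k
    = master_val cx I A B b cy d Gxy Gy hy Kpsi Ks Kx k /\
  (forall x : 'cV[R]_n1,
     mip_opt cx I A B b cy d Gxy Gy hy Kpsi Ks Kx k x <->
     master_opt cx I A B b cy d Gxy Gy hy Kpsi Ks Kx k x).
Proof.
move=> P1_neq0 P2_neq0; split; first exact: mip_val_master.
by move=> x; apply: mip_opt_master.
Qed.
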